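(* Let $(V,\mathcal H,\iota,W)$ be a generalized functional theory and let $\rho\in V^*$ be a pure-state $v$-representable density. If $\rho$ is a regular value of the smooth map $\iota^*|_{\mathcal P}:\mathcal P\to\mathrm{aff}(\iota^*(\mathcal P))$, then $\rho$ is uniquely $v$-representable.
   Context: A generalized functional theory is a tuple $(V,\mathcal H,\iota,W)$ with $V$ a finite-dimensional real vector space, $\mathcal H$ a finite-dimensional complex Hilbert space, $\iota:V\to i\mathfrak u(\mathcal H)$ a linear map into the Hermitian operators, and $W$ Hermitian. Density operators are regarded as elements of $(i\mathfrak u(\mathcal H))^*$ via the trace pairing; $\iota^*$ is the dual map. $\mathcal P$, the set of pure states (rank-one projectors), is a smooth manifold (identified with projective space). For $v\in V$, $\mathbf G_p(v)$ is the set of pure ground states of $\iota(v)+W$. A density $\rho$ is pure-state $v$-representable if $\rho\in\iota^*(\mathbf G_p(v))$ for some $v\in V$; it is uniquely $v$-representable if moreover every $v'\in V$ with $\rho\in\iota^*(\mathbf G_p(v'))$ satisfies $\iota(v')-\iota(v)\propto\mathbb 1$. A point $q$ is a regular value of a smooth map $f$ if the derivative of $f$ is surjective at every point of $f^{-1}(q)$ (vacuously so if $q\notin\mathrm{im} f$). *)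

From HB Require Import structures.
From mathcomp Require Import all_boot all_order all_algebra.
From mathcomp Require Import complex.
From mathcomp Require Import reals.
Set Implicit Arguments. Unset Strict Implicit. Unset Printing Implicit Defensive.
Import Order.TTheory GRing.Theory Num.Theory.
Local Open Scope ring_scope.
Local Open Scope complex_scope.

(* Conventions.
   - The real vector space V is R^m, elements are row vectors v : 'rV[R]_m
     (every finite-dimensional real vector space is of this form after a
     choice of basis).
   - The Hilbert space H is C^n (C = R[i]) with the standard inner product
     <x,y> = x^dagger y; states are column vectors 'cV[C]_n.
   - The linear map iota : V -> iu(H) is given by its values on the standard
     basis, a family A : 'I_m -> 'M[C]_n of Hermitian matrices:
        iota v = \sum_k v_k A_k.
   - Densities rho in V^* are represented by their coordinates
     rho_k = rho(e_k), so V^* = 'rV[R]_m and the dual map is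
        iota^*(Gamma)_k = tr (A_k Gamma)  (a real number for Hermitian Gamma;
        we take the real part). *)

Section GFT.
Variable R : realType.
Local Notation C := (R[i]).

Definition adj (p q : nat) (M : 'M[C]_(p, q)) : 'M[C]_(q, p) :=
  (map_mx (@conjc R) M)^T.

Definition is_hermitian (n : nat) (M : 'M[C]_n) : Prop := adj M = M.

Definition proj (n : nat) (psi : 'cV[C]_n) : 'M[C]_n := psi *m adj psi.

Definition unit_vec (n : nat) (psi : 'cV[C]_n) : Prop := adj psi *m psi = 1.

Definition pure_state (n : nat) (G : 'M[C]_n) : Prop :=
  exists psi : 'cV[C]_n, unit_vec psi /\ G = proj psi.

Definition iota (m n : nat) (A : 'I_m -> 'M[C]_n) (v : 'rV[R]_m) : 'M[C]_n :=
  \sum_(k < m) (v 0 k)%:C *: A k.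

Definition iota_star (m n : nat) (A : 'I_m -> 'M[C]_n) (G : 'M[C]_n)
  : 'rV[R]_m := \row_(k < m) complex.Re (\tr (A k *m G)).

Definition pure_ground_state (n : nat) (H G : 'M[C]_n) : Prop :=
  exists (psi : 'cV[C]_n) (lam : C),
    [/\ unit_vec psi, G = proj psi, H *m psi = lam *: psi &
        forall (mu : C) (phi : 'cV[C]_n), phi != 0 -> H *m phi = mu *: phi ->
          lam <= mu].

Definition represents (m n : nat) (A : 'I_m -> 'M[C]_n) (W : 'M[C]_n)
  (rho : 'rV[R]_m) (v : 'rV[R]_m) : Prop :=
  exists G : 'M[C]_n, pure_ground_state (iota A v + W) G /\ rho = iota_star A G.

Definition pure_v_representable (m n : nat) (A : 'I_m -> 'M[C]_n)
  (W : 'M[C]_n) (rho : 'rV[R]_m) : Prop :=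
  exists v, represents A W rho v.

Definition uniquely_v_representable (m n : nat) (A : 'I_m -> 'M[C]_n)
  (W : 'M[C]_n) (rho : 'rV[R]_m) : Prop :=
  exists v, represents A W rho v /\
    forall v', represents A W rho v' ->
      exists c : C, iota A v' - iota A v = c%:M.

(* The direction (linear) space of aff(iota^*(P)): the linear span of all
   differences iota^*(G1) - iota^*(G2), G1, G2 in P; it is the tangent space
   of the affine subspace aff(iota^*(P)) at each of its points. *)
Definition aff_direction (m n : nat) (A : 'I_m -> 'M[C]_n) (x : 'rV[R]_m)
  : Prop :=
  exists (k : nat) (c : 'I_k -> R) (G1 G2 : 'I_k -> 'M[C]_n),
    (forall i, pure_state (G1 i) /\ pure_state (G2 i)) /\
    x = \sum_(i < k) c i *: (iota_star A (G1 i) - iota_star A (G2 i)).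

(* Tangent space of the embedded submanifold P of the Hermitian operators at
   the point |psi><psi| (psi a unit vector):
     T P = { |phi><psi| + |psi><phi| : <psi,phi> = 0 }. *)
Definition tangent_vec (n : nat) (psi : 'cV[C]_n) (X : 'M[C]_n) : Prop :=
  exists phi : 'cV[C]_n, adj psi *m phi = 0 /\
    X = phi *m adj psi + psi *m adj phi.

(* Since iota^* is (real-)linear, its derivative along P is
   iota^* restricted to the tangent space of P. *)
Definition differential_surjective (m n : nat) (A : 'I_m -> 'M[C]_n)
  (psi : 'cV[C]_n) : Prop :=
  forall x : 'rV[R]_m, aff_direction A x ->
    exists X : 'M[C]_n, tangent_vec psi X /\ iota_star A X = x.

Definition regular_value (m n : nat) (A : 'I_m -> 'M[C]_n) (rho : 'rV[R]_m)
  : Prop :=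
  forall psi : 'cV[C]_n, unit_vec psi -> iota_star A (proj psi) = rho ->
    differential_surjective A psi.

End GFT.

From Pilot Require Import Defs.
From HB Require Import structures.
From mathcomp Require Import all_boot all_order all_algebra.
From mathcomp Require Import complex.
From mathcomp Require Import reals.
(* Let psi and psi' be ground states of H = iota v + W and H' = iota v' + W
   with the same density rho.  The expectation of iota u in a pure state only
   depends on its density, so the variational principle shows, as in the
   Hohenberg-Kohn argument, that psi is also a ground state of H'; hence psi is
   an eigenvector of D = iota (v' - v).  Then tr (D X) = 0 for every tangent
   vector X of P at psi.  Regularity of rho makes every difference
   iota^*(x1) - iota^*(x2) of densities of unit vectors the image of such an X,
   so <x1|D|x1> = <x2|D|x2> for all unit vectors: the Hermitian D has a single
   eigenvalue, i.e. it is a multiple of the identity. *)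

Set Implicit Arguments. Unset Strict Implicit. Unset Printing Implicit Defensive.
Import Order.TTheory GRing.Theory Num.Theory.
Local Open Scope ring_scope.

Section Adjoint.
Variable R : realType.
Local Notation C := (R[i]).

Lemma adj_mulmx p q r (M : 'M[C]_(p, q)) (N : 'M[C]_(q, r)) :
  adj (M *m N) = adj N *m adj M.
Proof. by rewrite /adj map_mxM trmx_mul. Qed.

Lemma adjK p q (M : 'M[C]_(p, q)) : adj (adj M) = M.
Proof. by apply/matrixP => i j; rewrite !mxE conjcK. Qed.

Lemma adjD p q (M N : 'M[C]_(p, q)) : adj (M + N) = adj M + adj N.
Proof. by apply/matrixP => i j; rewrite !mxE rmorphD. Qed.

Lemma adj_scale p q (c : C) (M : 'M[C]_(p, q)) : adj (c *: M) = c^*%C *: adj M.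
Proof. by apply/matrixP => i j; rewrite !mxE rmorphM. Qed.

Lemma adj_sum p q (I : finType) (F : I -> 'M[C]_(p, q)) :
  adj (\sum_i F i) = \sum_i adj (F i).
Proof.
apply/matrixP => i j; rewrite !mxE !summxE rmorph_sum.
by apply: eq_bigr => k _; rewrite !mxE.
Qed.

Lemma adj_col p q (M : 'M[C]_(p, q)) j : adj (col j M) = row j (adj M).
Proof. by apply/matrixP => a b; rewrite !mxE. Qed.

Lemma adj_trC p q (M : 'M[C]_(p, q)) : adj M = map_mx (@Num.conj C) M^T.
Proof. by apply/matrixP => i j; rewrite !mxE. Qed.

Lemma hermitianD n (H K : 'M[C]_n) :
  is_hermitian H -> is_hermitian K -> is_hermitian (H + K).
Proof. by rewrite /is_hermitian adjD => -> ->. Qed.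

Lemma hermitian_iota m n (A : 'I_m -> 'M[C]_n) (u : 'rV[R]_m) :
  (forall k, is_hermitian (A k)) -> is_hermitian (Defs.iota A u).
Proof.
move=> hA; rewrite /is_hermitian /Defs.iota adj_sum; apply: eq_bigr => k _.
by rewrite adj_scale conjc_real hA.
Qed.

Lemma iotaB m n (A : 'I_m -> 'M[C]_n) (u1 u2 : 'rV[R]_m) :
  Defs.iota A (u1 - u2) = Defs.iota A u1 - Defs.iota A u2.
Proof.
rewrite /Defs.iota -sumrB; apply: eq_bigr => k _.
by rewrite !mxE rmorphB scalerBl.
Qed.

End Adjoint.

Section Energy.
Variable R : realType.
Local Notation C := (R[i]).

Definition energy n (H : 'M[C]_n) (x : 'cV[C]_n) : R := complex.Re (\tr (H *m proj x)).

Lemma energyE n (H : 'M[C]_n) x : energy H x = complex.Re ((adj x *m H *m x) 0 0).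
Proof. by rewrite /energy /proj mulmxA mxtrace_mulC mulmxA /mxtrace big_ord1. Qed.

Lemma energyD n (H K : 'M[C]_n) x : energy (H + K) x = energy H x + energy K x.
Proof. by rewrite /energy mulmxDl mxtraceD; case: (\tr _) => ? ?; case: (\tr _). Qed.

Lemma energy_eigen n (H : 'M[C]_n) x (mu : C) :
  unit_vec x -> H *m x = mu *: x -> energy H x = complex.Re mu.
Proof.
by move=> x_unit Hx; rewrite energyE -mulmxA Hx -scalemxAr x_unit !mxE eqxx mulr1.
Qed.

Lemma energy_shift n (H : 'M[C]_n) x (lam : C) :
  unit_vec x -> energy (H - lam%:M) x = energy H x - complex.Re lam.
Proof.
move=> x_unit; rewrite energyD (@energy_eigen _ (- lam%:M) x (- lam)) //.
  by case: lam.
by rewrite -scalemx1 -scaleNr -scalemxAl mul1mx.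
Qed.

Lemma diag_form n (d : 'rV[C]_n) (y : 'cV[C]_n) :
  (adj y *m diag_mx d *m y) 0 0 = \sum_j d 0 j * ((y j 0)^*%C * y j 0).
Proof.
rewrite -mulmxA mxE; apply: eq_bigr => j _.
by rewrite mul_diag_mx !mxE mulrCA mulrA.
Qed.

End Energy.

Lemma diag_mx_delta (R : pzSemiRingType) n (d : 'rV[R]_n) j :
  diag_mx d *m (delta_mx j 0 : 'cV_n) = d 0 j *: delta_mx j 0.
Proof.
apply/matrixP => a b; rewrite mul_diag_mx !mxE.
by case: (eqVneq a j) => [->|]; rewrite ?mulr0 ?mulr1.
Qed.

Section SpectralForm.
Variables (R : realType) (n : nat) (P : 'M[R[i]]_n) (d : 'rV[R[i]]_n).
Hypothesis PadjP : P *m adj P = 1%:M.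
Local Notation H := (adj P *m diag_mx d *m P).

Lemma spectral_eigenvector j : H *m col j (adj P) = d 0 j *: col j (adj P).
Proof.
by rewrite colE -!mulmxA (mulmxA P) PadjP mul1mx diag_mx_delta scalemxAr.
Qed.

Lemma spectral_unit_vec j : unit_vec (col j (adj P)).
Proof.
rewrite /unit_vec adj_col adjK colE rowE mulmxA -(mulmxA _ P) PadjP mulmx1.
by rewrite mul_delta_mx; apply/rowP => a; rewrite !ord1 !mxE.
Qed.

Lemma spectral_energy x :
  energy H x = complex.Re (\sum_j d 0 j * (((P *m x) j 0)^*%C * (P *m x) j 0)).
Proof. by rewrite energyE -diag_form adj_mulmx !mulmxA. Qed.

Hypothesis d_ge0 : forall j, 0 <= d 0 j.

Let spectral_term_ge0 (y : 'cV_n) j : 0 <= d 0 j * ((y j 0)^*%C * y j 0).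
Proof. by rewrite mulr_ge0 // mulrC mulcJ_ge0. Qed.

Let spectral_sum_ge0 (y : 'cV_n) : 0 <= \sum_j d 0 j * ((y j 0)^*%C * y j 0).
Proof. by apply: sumr_ge0 => j _; apply: spectral_term_ge0. Qed.

Lemma psd_energy_ge0 x : 0 <= energy H x.
Proof.
by have := spectral_sum_ge0 (P *m x); rewrite spectral_energy lecE => /andP[].
Qed.

Lemma psd_energy_eq0 x : energy H x <= 0 -> H *m x = 0.
Proof.
set y := P *m x; rewrite spectral_energy -/y => Re_le0.
have sum_eq0 : \sum_j d 0 j * ((y j 0)^*%C * y j 0) = 0.
  have := spectral_sum_ge0 y; rewrite lecE => /andP[/eqP Im_eq0 Re_ge0].
  apply/eqP; rewrite eq_complex -Im_eq0 eqxx andbT /=.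
  by rewrite eq_le Re_le0 Re_ge0.
have dy_eq0 : diag_mx d *m y = 0.
  apply/matrixP => j b; rewrite ord1 mul_diag_mx mxE [RHS]mxE.
  move/eqP: sum_eq0; rewrite psumr_eq0 => [/allP/(_ j (mem_index_enum j))|k _].
    by rewrite /= !mulf_eq0 conjc_eq0 orbb => /orP[]/eqP->; rewrite ?mul0r ?mulr0.
  exact: spectral_term_ge0.
by rewrite -!mulmxA -/y dy_eq0 mulmx0.
Qed.

End SpectralForm.

Section Hermitian.
Variable R : realType.
Local Notation C := (R[i]).

Lemma hermitian_spectral n (H : 'M[C]_n) : is_hermitian H ->
  exists (P : 'M[C]_n) (d : 'rV[C]_n),
   [/\ adj P *m P = 1%:M, P *m adj P = 1%:M,
       H = adj P *m diag_mx d *m P & forall j, complex.Im (d 0 j) = 0].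
Proof.
move=> H_herm.
have H_hermsym : H \is hermsymmx.
  by apply/is_hermitianmxP; rewrite expr0 scale1r -adj_trC H_herm.
have P_unitary := spectral_unitarymx H.
have /orthomx_spectralP HE := hermitian_normalmx H_hermsym.
have d_real := hermitian_spectral_diag_real H_hermsym.
exists (spectralmx H), (spectral_diag H); split.
- by rewrite adj_trC -(invmx_unitary P_unitary) mulVmx // unitarymx_unit.
- by rewrite adj_trC; apply/unitarymxP.
- by rewrite adj_trC -(invmx_unitary P_unitary).
- by move=> j; have /mxOverP/(_ 0 j)/RIm_real[] := d_real.
Qed.

Lemma unit_vec_neq0 n (x : 'cV[C]_n) : unit_vec x -> x != 0.
Proof.
move=> x_unit; apply/eqP => x_eq0; move: x_unit.
by rewrite /unit_vec x_eq0 mulmx0 => /eqP; rewrite eq_sym oner_eq0.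
Qed.

Definition spectrum_lb n (H : 'M[C]_n) (lam : C) : Prop :=
  forall (mu : C) (phi : 'cV[C]_n), phi != 0 -> H *m phi = mu *: phi -> lam <= mu.

Lemma hermitian_shift_psd n (H : 'M[C]_n) (lam : C) :
  is_hermitian H -> spectrum_lb H lam ->
  exists (P : 'M[C]_n) (d : 'rV[C]_n),
    H - lam%:M = adj P *m diag_mx d *m P /\ forall j, 0 <= d 0 j.
Proof.
move=> H_herm H_lb; have [P [d [adjPP PadjP HE _]]] := hermitian_spectral H_herm.
exists P, (d - const_mx lam); split => //.
  rewrite linearB /= diag_const_mx mulmxBr mulmxBl -HE.
  by rewrite mul_mx_scalar -scalemxAl adjPP scalemx1.
move=> j; rewrite !mxE subr_ge0.
apply: (H_lb _ _ (unit_vec_neq0 (spectral_unit_vec PadjP j))).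
by rewrite HE spectral_eigenvector.
Qed.

Lemma ground_energy_le n (H : 'M[C]_n) (lam : C) x :
  is_hermitian H -> spectrum_lb H lam -> unit_vec x ->
  complex.Re lam <= energy H x.
Proof.
move=> H_herm H_lb x_unit.
have [P [d [HE d_ge0]]] := hermitian_shift_psd H_herm H_lb.
by have := psd_energy_ge0 P d_ge0 x; rewrite -HE energy_shift // subr_ge0.
Qed.

Lemma ground_energy_eq n (H : 'M[C]_n) (lam : C) x :
  is_hermitian H -> spectrum_lb H lam -> unit_vec x ->
  energy H x <= complex.Re lam -> H *m x = lam *: x.
Proof.
move=> H_herm H_lb x_unit x_min.
have [P [d [HE d_ge0]]] := hermitian_shift_psd H_herm H_lb.
have := psd_energy_eq0 (P := P) d_ge0 (x := x).
rewrite -HE energy_shift // subr_le0 => /(_ x_min)/eqP.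
by rewrite mulmxBl mul_scalar_mx subr_eq0 => /eqP.
Qed.

Lemma hermitian_energy_const n (D : 'M[C]_n) : is_hermitian D ->
  (forall x1 x2, unit_vec x1 -> unit_vec x2 -> energy D x1 = energy D x2) ->
  exists c : C, D = c%:M.
Proof.
case: n D => [|n] D D_herm energy_const; first by exists 0; apply/matrixP => [[]].
have [P [d [adjPP PadjP DE d_real]]] := hermitian_spectral D_herm.
have energy_col j : energy D (col j (adj P)) = complex.Re (d 0 j).
  by apply: energy_eigen (spectral_unit_vec PadjP j) _; rewrite DE spectral_eigenvector.
have d_const j : d 0 j = d 0 ord0.
  apply/eqP; rewrite eq_complex !d_real eqxx andbT -!energy_col.
  by apply/eqP/energy_const; apply: spectral_unit_vec.
exists (d 0 ord0); rewrite DE (_ : diag_mx d = (d 0 ord0)%:M).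
  by rewrite mul_mx_scalar -scalemxAl adjPP scalemx1.
by apply/matrixP => a b; rewrite !mxE d_const.
Qed.

End Hermitian.

Section GroundStates.
Variable R : realType.
Local Notation C := (R[i]).

Definition ground_vector n (H : 'M[C]_n) (psi : 'cV[C]_n) (lam : C) : Prop :=
  [/\ unit_vec psi, H *m psi = lam *: psi & spectrum_lb H lam].

Lemma pure_ground_state_vector n (H G : 'M[C]_n) : pure_ground_state H G ->
  exists psi lam, G = proj psi /\ ground_vector H psi lam.
Proof. by case=> psi [lam [psi_unit G_proj Hpsi H_lb]]; exists psi, lam. Qed.

Lemma ground_state_transfer n (H H' : 'M[C]_n) psi psi' lam lam' :
  is_hermitian H -> is_hermitian H' ->
  ground_vector H psi lam -> ground_vector H' psi' lam' ->
  energy (H' - H) psi = energy (H' - H) psi' -> H' *m psi = lam' *: psi.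
Proof.
move=> H_herm H'_herm [psi_unit Hpsi H_lb] [psi'_unit H'psi' H'_lb] Delta_eq.
have energy_split x : energy H' x = energy H x + energy (H' - H) x.
  by rewrite -energyD addrC subrK.
(* <psi|H'|psi> = <psi|H|psi> + <psi|H'-H|psi>
               <= <psi'|H|psi'> + <psi'|H'-H|psi'> = lam' *)
apply: (ground_energy_eq H'_herm H'_lb psi_unit).
rewrite -(energy_eigen psi'_unit H'psi') !energy_split Delta_eq lerD2r.
by rewrite (energy_eigen psi_unit Hpsi) (ground_energy_le H_herm H_lb psi'_unit).
Qed.

Lemma trace_tangent n (D : 'M[C]_n) psi (mu : C) X :
  is_hermitian D -> D *m psi = mu *: psi -> tangent_vec psi X ->
  \tr (D *m X) = 0.
Proof.
move=> D_herm Dpsi [phi [psi_phi ->]].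
have psiD : adj psi *m D = adj (mu *: psi) by rewrite -Dpsi adj_mulmx D_herm.
have phi_psi : adj phi *m psi = 0.
  by rewrite -[psi]adjK -adj_mulmx psi_phi; apply/matrixP => a b; rewrite !mxE conjc0.
rewrite mulmxDr mxtraceD !mulmxA Dpsi mxtrace_mulC [\tr (mu *: _ *m _)]mxtrace_mulC.
rewrite mulmxA psiD adj_scale -scalemxAl psi_phi -scalemxAr phi_psi !scaler0.
by rewrite mxtrace0 addr0.
Qed.

Lemma pure_state_proj n (x : 'cV[C]_n) : unit_vec x -> pure_state (proj x).
Proof. by move=> x_unit; exists x. Qed.

Definition pairing m (u r : 'rV[R]_m) : R := \sum_k u 0 k * r 0 k.

Lemma pairingB m (u r1 r2 : 'rV[R]_m) :
  pairing u (r1 - r2) = pairing u r1 - pairing u r2.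
Proof. by rewrite /pairing -sumrB; apply: eq_bigr => k _; rewrite !mxE mulrBr. Qed.

Section DualMap.
Variables (m n : nat) (A : 'I_m -> 'M[C]_n).

Lemma pairing_iota_star u G :
  pairing u (iota_star A G) = complex.Re (\tr (Defs.iota A u *m G)).
Proof.
rewrite /pairing /Defs.iota mulmx_suml.
rewrite (big_morph _ (@mxtraceD _ _) (@mxtrace0 _ _)) raddf_sum.
apply: eq_bigr => k _; rewrite -scalemxAl mxtraceZ mxE.
by case: (\tr _) => ? ? /=; rewrite mul0r subr0.
Qed.

Lemma energy_iota u x : energy (Defs.iota A u) x = pairing u (iota_star A (proj x)).
Proof. by rewrite pairing_iota_star. Qed.

Lemma aff_direction_diff G1 G2 : pure_state G1 -> pure_state G2 ->
  aff_direction A (iota_star A G1 - iota_star A G2).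
Proof.
move=> G1_pure G2_pure; exists 1%N, (fun=> 1), (fun=> G1), (fun=> G2).
by split=> //; rewrite big_ord1 scale1r.
Qed.

Lemma surjective_energy_const psi u (mu : C) x1 x2 :
  (forall k, is_hermitian (A k)) -> differential_surjective A psi ->
  Defs.iota A u *m psi = mu *: psi -> unit_vec x1 -> unit_vec x2 ->
  energy (Defs.iota A u) x1 = energy (Defs.iota A u) x2.
Proof.
move=> A_herm dsurj upsi x1_unit x2_unit.
have [X [X_tan X_im]] :=
  dsurj _ (aff_direction_diff (pure_state_proj x1_unit) (pure_state_proj x2_unit)).
apply/eqP; rewrite -subr_eq0 !energy_iota -pairingB -X_im pairing_iota_star.
by rewrite (trace_tangent (hermitian_iota u A_herm) upsi X_tan).
Qed.

End DualMap.
End GroundStates.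

Theorem proposition2p19 (R : realType) (m n : nat)
  (A : 'I_m -> 'M[R[i]]_n) (W : 'M[R[i]]_n) (rho : 'rV[R]_m) :
  (forall k, is_hermitian (A k)) -> is_hermitian W ->
  pure_v_representable A W rho ->
  regular_value A rho ->
  uniquely_v_representable A W rho.
Proof.
move=> A_herm W_herm [v [G [G_ground rhoE]]] rho_regular.
exists v; split; first by exists G.
move=> v' [G' [G'_ground rho'E]].
have [psi [lam [GE psi_ground]]] := pure_ground_state_vector G_ground.
have [psi' [lam' [G'E psi'_ground]]] := pure_ground_state_vector G'_ground.
have H_herm u : is_hermitian (Defs.iota A u + W).
  exact: hermitianD (hermitian_iota u A_herm) W_herm.
have H_diff : Defs.iota A v' + W - (Defs.iota A v + W) = Defs.iota A (v' - v).
  by rewrite iotaB opprD addrACA subrr addr0.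
have psi_shared : (Defs.iota A v' + W) *m psi = lam' *: psi.
  apply: (ground_state_transfer (H_herm v) (H_herm v') psi_ground psi'_ground).
  by rewrite H_diff !energy_iota -GE -G'E -rhoE -rho'E.
have Dpsi : Defs.iota A (v' - v) *m psi = (lam' - lam) *: psi.
  by case: psi_ground => _ Hpsi _; rewrite -H_diff mulmxBl psi_shared Hpsi scalerBl.
have [psi_unit _ _] := psi_ground.
have psi_regular : differential_surjective A psi.
  by apply: rho_regular psi_unit _; rewrite rhoE GE.
have [c cE] := hermitian_energy_const (hermitian_iota (v' - v) A_herm)
  (fun x1 x2 => surjective_energy_const A_herm psi_regular Dpsi).
by exists c; rewrite -iotaB.
Qed.
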